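(* Let $N,d\in\mathbb{N}^+$, let $\Gamma\in\mathbb{R}^{N\times N}$ be symmetric positive semidefinite, $\Sigma\in\mathbb{R}^{d\times d}$ symmetric positive semidefinite, and $\mu\in\mathbb{R}^{dN}$. Fix $t\in(0,T]$ and a vector $v_t\in\mathbb{R}^{dN}$. Let $\alpha_t=e^{-t/2}$, $\sigma_t=\sqrt{1-e^{-t}}$, and $$\nabla\log p_t(v_t)=-\big(\alpha_t^2(\Gamma\otimes\Sigma)+\sigma_t^2 I\big)^{-1}(v_t-\alpha_t\mu).$$ Given an error tolerance $\epsilon\in(0,1)$ and any integer $J<N$, define $\bar\Gamma\in\mathbb{R}^{N\times N}$ by $\bar\Gamma_{ij}=\Gamma_{ij}\,\mathbf{1}\{|i-j|<J\}$ and assume $\bar\Gamma$ is positive semidefinite. Consider the gradient descent iteration $$s^{(k+1)}=s^{(k)}-\eta_t\Big(\big(\alpha_t^2(\bar\Gamma\otimes\Sigma)+\sigma_t^2 I\big)s^{(k)}+(v_t-\alpha_t\mu)\Big),\qquad s^{(0)}=0 .$$ Then with a suitable step size $\eta_t$, after $K=O\big(\kappa_t\log(1/\epsilon)\big)$ iterations, $$\big\|s^{(K)}(v_t)-\nabla\log p_t(v_t)\big\|_2\le \frac{1}{\sigma_t^2}\|v_t-\alpha_t\mu\|_2\,\epsilon+\frac{\|\Sigma\|_{\rm F}\,\|v_t-\alpha_t\mu\|_2}{\sigma_t^4}\sqrt{\sum_{|i-j|\ge J}\Gamma_{ij}^2},$$ where $\kappa_t=\kappa\big(\alpha_t^2(\bar\Gamma\otimes\Sigma)+\sigma_t^2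 I\big)$.
   Context: $\otimes$ denotes the Kronecker product and $I$ the identity of size $dN$. For a positive definite matrix $A$, $\kappa(A)=\lambda_{\max}(A)/\lambda_{\min}(A)$ is its condition number. $\|\cdot\|_{\rm F}$ is the Frobenius norm. The vector $-\big(\alpha_t^2(\Gamma\otimes\Sigma)+\sigma_t^2 I\big)^{-1}(v-\alpha_t\mu)$ is the score (gradient of the log-density) of the Gaussian distribution $N(\alpha_t\mu,\alpha_t^2\Gamma\otimes\Sigma+\sigma_t^2 I)$, which is the law at diffusion time $t$ of the Ornstein–Uhlenbeck forward process $dX_t=-\tfrac12X_tdt+dW_t$ started from $N(\mu,\Gamma\otimes\Sigma)$. *)

From HB Require Import structures.
From mathcomp Require Import all_boot all_order all_algebra.
From mathcomp Require Import boolp classical_sets reals sequences exp.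
From mathcomp Require Export mxtens.
Set Implicit Arguments. Unset Strict Implicit. Unset Printing Implicit Defensive.
Import Order.TTheory GRing.Theory Num.Theory.
Local Open Scope classical_set_scope.
Local Open Scope ring_scope.

Section Defs.
Variable R : realType.

Definition psd n (A : 'M[R]_n) : Prop :=
  A^T = A /\ forall x : 'cV[R]_n, 0 <= (x^T *m A *m x) 0 0.

Definition lam_max n (A : 'M[R]_n) : R := sup [set a : R | eigenvalue A a].
Definition lam_min n (A : 'M[R]_n) : R := inf [set a : R | eigenvalue A a].
Definition cond_num n (A : 'M[R]_n) : R := lam_max A / lam_min A.

Definition norm2 n (v : 'cV[R]_n) : R := Num.sqrt (\sum_(i < n) v i 0 ^+ 2).
Definition frob m n (A : 'M[R]_(m, n)) : R :=
  Num.sqrt (\sum_(i < m) \sum_(j < n) A i j ^+ 2).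

Definition band_trunc N (J : int) (G : 'M[R]_N) : 'M[R]_N :=
  \matrix_(i, j) (if `|(i : nat)%:Z - (j : nat)%:Z| < J then G i j else 0).

Definition tail_sq N (J : int) (G : 'M[R]_N) : R :=
  \sum_(i < N) \sum_(j < N | J <= `|(i : nat)%:Z - (j : nat)%:Z|) G i j ^+ 2.

Fixpoint gd_iter n (A : 'M[R]_n) (b : 'cV[R]_n) (eta : R) (k : nat) : 'cV[R]_n :=
  match k with
  | O => 0
  | S k' => let s := gd_iter A b eta k' in s - eta *: (A *m s + b)
  end.
End Defs.

(* Let A = a^2 (G (x) S) + sg^2 I and Abar = a^2 (Gbar (x) S) + sg^2 I.  The
   eigenvalues of a Kronecker product are the products of the eigenvalues of its
   factors, so G (x) S and Gbar (x) S are positive semidefinite and both A and Abar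
   dominate sg^2 I; hence |A^-1 y|, |Abar^-1 y| <= |y| / sg^2.  Gradient descent on
   Abar s = -b with step 1 / lam_max(Abar) contracts the error by
   q = 1 - lam_min / lam_max = 1 - 1 / kappa, and q^K <= eps once K >= kappa ln (1/eps);
   since s^(0) = 0 starts at distance |Abar^-1 b| <= |b| / sg^2 from the fixed point,
   this gives the first term.  The second term comes from the resolvent identity
   A^-1 - Abar^-1 = A^-1 (Abar - A) Abar^-1, where the operator norm of
   Abar - A = a^2 ((Gbar - G) (x) S) is at most its Frobenius norm
   a^2 |S|_F |Gbar - G|_F <= |S|_F (sum_{|i-j| >= J} G_ij^2)^(1/2). *)

From HB Require Import structures.
From mathcomp Require Import all_boot all_order all_algebra.
From mathcomp Require Import reals sequences exp mxtens complex.
From mathcomp Require Import spectral sesquilinear.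
From mathcomp Require Import ring lra.
Set Implicit Arguments. Unset Strict Implicit. Unset Printing Implicit Defensive.
Import Order.TTheory GRing.Theory Num.Theory Num.Def.
Local Open Scope ring_scope.

Lemma mxtens_index_eq m p (i : 'I_m * 'I_p) (j : 'I_m * 'I_p) :
  (mxtens_index i == mxtens_index j) = (i == j).
Proof. exact/inj_eq/(can_inj (@mxtens_indexK m p)). Qed.

Lemma tens_diag_mx (T : comPzRingType) m p (d : 'I_m -> T) (e : 'I_p -> T) :
  diag_mx (\row_i d i) *t diag_mx (\row_j e j) =
  diag_mx (\row_k (d (mxtens_unindex k).1 * e (mxtens_unindex k).2)).
Proof.
apply/matrixP => k l.
case: (mxtens_indexP k) => i1 i2; case: (mxtens_indexP l) => j1 j2.
rewrite tensmxE !mxE !mxtens_indexK mxtens_index_eq xpair_eqE /=.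
by case: (i1 == j1); case: (i2 == j2); rewrite ?mulr1n ?mulr0n ?mulr0 ?mul0r.
Qed.

Lemma tens1mx (T : comPzRingType) m p :
  (1%:M : 'M[T]_m) *t (1%:M : 'M[T]_p) = 1%:M.
Proof.
apply/matrixP => k l.
case: (mxtens_indexP k) => i1 i2; case: (mxtens_indexP l) => j1 j2.
rewrite tensmxE !mxE mxtens_index_eq xpair_eqE.
by case: (i1 == j1); case: (i2 == j2); rewrite /= ?mulr1n ?mulr0n ?mulr1 ?mulr0.
Qed.

Lemma tensmxBl (T : pzRingType) m n p q (A B : 'M[T]_(m, n)) (C : 'M[T]_(p, q)) :
  (A - B) *t C = A *t C - B *t C.
Proof. by apply/matrixP => i j; rewrite !mxE mulrBl. Qed.

Lemma invmxB (F : fieldType) n (A B : 'M[F]_n) : A \in unitmx -> B \in unitmx ->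
  invmx A - invmx B = invmx A *m (B - A) *m invmx B.
Proof.
move=> A_unit B_unit; rewrite mulmxBr mulVmx // mulmxBl mul1mx.
by rewrite -mulmxA mulmxV // mulmx1.
Qed.

Section EuclideanNorm.
Variable R : realType.
Implicit Types (n : nat) (k : R).

Lemma cauchy_schwarz n (f g : 'I_n -> R) :
  (\sum_i f i * g i) ^+ 2 <= (\sum_i f i ^+ 2) * (\sum_i g i ^+ 2).
Proof.
set X := \sum_i f i ^+ 2; set Y := \sum_i g i ^+ 2; set P := \sum_i f i * g i.
have X_ge0 : 0 <= X by apply: sumr_ge0 => i _; rewrite sqr_ge0.
have [X0|X_neq0] := eqVneq X 0.
  have f0 i : f i = 0.
    apply/eqP; rewrite -sqrf_eq0; apply/eqP.
    by apply: (psumr_eq0P _ X0) => // j _; rewrite sqr_ge0.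
  by rewrite /P big1 ?expr0n ?X0 ?mul0r // => i _; rewrite f0 mul0r.
have X_gt0 : 0 < X by rewrite lt_def X_neq0.
(* evaluate the nonnegative quadratic [u |-> \sum_i (u f i - g i)^2] at its minimiser *)
have : 0 <= \sum_i (P / X * f i - g i) ^+ 2 by apply: sumr_ge0 => i _; rewrite sqr_ge0.
have -> : \sum_i (P / X * f i - g i) ^+ 2 = Y - P ^+ 2 / X.
  rewrite (eq_bigr (fun i => (P / X) ^+ 2 * f i ^+ 2 - 2 * (P / X) * (f i * g i)
    + g i ^+ 2)) => [|i _]; last by ring.
  rewrite !big_split /= sumrN -!mulr_sumr -/X -/Y -/P; field.
  by rewrite X_neq0.
by rewrite subr_ge0 ler_pdivrMr // mulrC.
Qed.

Lemma norm2_ge0 n (x : 'cV[R]_n) : 0 <= norm2 x.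
Proof. exact: sqrtr_ge0. Qed.

Lemma norm2_sqr n (x : 'cV[R]_n) : norm2 x ^+ 2 = \sum_i x i 0 ^+ 2.
Proof. by rewrite sqr_sqrtr // sumr_ge0 // => i _; rewrite sqr_ge0. Qed.

Lemma norm2_eq0 n (x : 'cV[R]_n) : (norm2 x == 0) = (x == 0).
Proof.
rewrite -sqrf_eq0 norm2_sqr; apply/idP/eqP => [/eqP x0|->].
  apply/matrixP => i j; rewrite ord1 mxE; apply/eqP; rewrite -sqrf_eq0.
  by apply/eqP/(psumr_eq0P _ x0) => // k _; rewrite sqr_ge0.
by rewrite big1 // => i _; rewrite mxE expr0n.
Qed.

Lemma norm2_gt0 n (x : 'cV[R]_n) : x != 0 -> 0 < norm2 x.
Proof. by rewrite lt_def norm2_eq0 norm2_ge0 andbT. Qed.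

Lemma norm2_le n (x : 'cV[R]_n) c : 0 <= c -> norm2 x ^+ 2 <= c ^+ 2 -> norm2 x <= c.
Proof. by move=> c_ge0; rewrite ler_sqr // nnegrE norm2_ge0. Qed.

Lemma dot_le_norm2 n (x y : 'cV[R]_n) : (x^T *m y) 0 0 <= norm2 x * norm2 y.
Proof.
rewrite mxE; apply: le_trans (ler_norm _) _; rewrite -ler_sqr ?nnegrE //; last first.
  by rewrite mulr_ge0 ?norm2_ge0.
rewrite real_normK ?num_real // exprMn !norm2_sqr.
by under eq_bigr do rewrite mxE; apply: cauchy_schwarz.
Qed.

Lemma norm2D_sqr n (x y : 'cV[R]_n) :
  norm2 (x + y) ^+ 2 = norm2 x ^+ 2 + 2 * (x^T *m y) 0 0 + norm2 y ^+ 2.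
Proof.
rewrite !norm2_sqr mxE mulr_sumr -!big_split /=; apply: eq_bigr => i _.
by rewrite !mxE; ring.
Qed.

Lemma norm2D n (x y : 'cV[R]_n) : norm2 (x + y) <= norm2 x + norm2 y.
Proof.
apply: norm2_le; first by rewrite addr_ge0 ?norm2_ge0.
by rewrite norm2D_sqr sqrrD; have := dot_le_norm2 x y; lra.
Qed.

Lemma norm2Z n k (x : 'cV[R]_n) : norm2 (k *: x) = `|k| * norm2 x.
Proof.
rewrite /norm2 -sqrtr_sqr -sqrtrM ?sqr_ge0 // mulr_sumr.
by congr Num.sqrt; apply: eq_bigr => i _; rewrite mxE exprMn.
Qed.

Lemma norm2N n (x : 'cV[R]_n) : norm2 (- x) = norm2 x.
Proof. by rewrite -scaleN1r norm2Z normrN1 mul1r. Qed.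

Lemma frob_ge0 m n (M : 'M[R]_(m, n)) : 0 <= frob M.
Proof. exact: sqrtr_ge0. Qed.

Lemma frob_sqr m n (M : 'M[R]_(m, n)) : frob M ^+ 2 = \sum_i \sum_j M i j ^+ 2.
Proof.
rewrite sqr_sqrtr // sumr_ge0 // => i _.
by rewrite sumr_ge0 // => j _; rewrite sqr_ge0.
Qed.

Lemma norm2_mulmx_le m n (M : 'M[R]_(m, n)) (x : 'cV[R]_n) :
  norm2 (M *m x) <= frob M * norm2 x.
Proof.
apply: norm2_le; first by rewrite mulr_ge0 ?frob_ge0 ?norm2_ge0.
rewrite exprMn frob_sqr !norm2_sqr mulr_suml; apply: ler_sum => i _.
by rewrite mxE; apply: cauchy_schwarz.
Qed.

Lemma frobZ m n k (M : 'M[R]_(m, n)) : frob (k *: M) = `|k| * frob M.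
Proof.
rewrite /frob -sqrtr_sqr -sqrtrM ?sqr_ge0 // mulr_sumr; congr Num.sqrt.
apply: eq_bigr => i _; rewrite mulr_sumr; apply: eq_bigr => j _.
by rewrite mxE exprMn.
Qed.

Lemma frob_tens m n p q (M : 'M[R]_(m, n)) (M' : 'M[R]_(p, q)) :
  frob (M *t M') = frob M * frob M'.
Proof.
rewrite /frob -sqrtrM; last by rewrite -frob_sqr sqr_ge0.
congr Num.sqrt.
rewrite mulr_sum; apply: eq_bigr => i _; rewrite mulr_sum; apply: eq_bigr => j _.
by rewrite mxE exprMn.
Qed.

Lemma frob_band_trunc_sub N J (G : 'M[R]_N) :
  frob (band_trunc J G - G) = Num.sqrt (tail_sq J G).
Proof.
rewrite /frob /tail_sq; congr Num.sqrt; apply: eq_bigr => i _.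
rewrite [RHS]big_mkcond /=; apply: eq_bigr => j _.
by rewrite !mxE; case: ltP => _; rewrite ?subrr ?expr0n ?sub0r ?sqrrN.
Qed.

End EuclideanNorm.

Section QuadraticForm.
Variable R : realType.
Implicit Types (n : nat) (k : R).

Definition qform n (A : 'M[R]_n) (x : 'cV[R]_n) : R := (x^T *m A *m x) 0 0.

Lemma qformD n (A B : 'M[R]_n) x : qform (A + B) x = qform A x + qform B x.
Proof. by rewrite /qform mulmxDr mulmxDl mxE. Qed.

Lemma qformZ n k (A : 'M[R]_n) x : qform (k *: A) x = k * qform A x.
Proof. by rewrite /qform -scalemxAr -scalemxAl mxE. Qed.

Lemma qform1 n (x : 'cV[R]_n) : qform 1%:M x = norm2 x ^+ 2.
Proof. by rewrite /qform mulmx1 norm2_sqr mxE; under eq_bigr do rewrite mxE. Qed.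

Lemma norm2_mulmx_sqr n (M : 'M[R]_n) x : norm2 (M *m x) ^+ 2 = qform (M^T *m M) x.
Proof. by rewrite -qform1 /qform mulmx1 trmx_mul !mulmxA. Qed.

Lemma eigenvalue_qform n (A : 'M[R]_n) a : eigenvalue A a ->
  exists2 x, x != 0 & qform A x = a * norm2 x ^+ 2.
Proof.
case/eigenvalueP => v vA v_neq0; exists v^T; first by rewrite trmx_eq0.
by rewrite /qform trmxK vA -scalemxAl -qform1 /qform mulmx1 trmxK [LHS]mxE.
Qed.

Lemma psd_eigenvalue_ge0 n (A : 'M[R]_n) a : psd A -> eigenvalue A a -> 0 <= a.
Proof.
move=> [_ A_ge0] /eigenvalue_qform [x x_neq0 Ax].
by have := A_ge0 x; rewrite -/(qform A x) Ax pmulr_lge0 // exprn_gt0 ?norm2_gt0.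
Qed.

Definition coercive n (A : 'M[R]_n) (s : R) := forall x, s * norm2 x ^+ 2 <= qform A x.

Section Coercive.
Variables (n : nat) (A : 'M[R]_n) (s : R).
Hypotheses (s_gt0 : 0 < s) (A_coercive : coercive A s).

Lemma coercive_unitmx : A \in unitmx.
Proof.
rewrite unitmxE unitfE; apply/negP => /det0P [v v_neq0 vA].
have := A_coercive v^T; rewrite /qform trmxK vA mul0mx mxE pmulr_rle0 //.
by rewrite real_leNgt ?num_real // exprn_gt0 // norm2_gt0 // trmx_eq0.
Qed.

Lemma coercive_norm2_invmx y : norm2 (invmx A *m y) <= norm2 y / s.
Proof.
set x := invmx A *m y.
have := A_coercive x; rewrite /qform -mulmxA mulKVmx ?coercive_unitmx // => Ax.
have {Ax} := le_trans Ax (dot_le_norm2 x y).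
have [->|x_neq0] := eqVneq (norm2 x) 0.
  by move=> _; rewrite divr_ge0 ?norm2_ge0 // ltW.
rewrite expr2 mulrA [norm2 x * _]mulrC ler_pM2r ?lt_def ?x_neq0 ?norm2_ge0 // => sx.
by rewrite ler_pdivlMr // mulrC.
Qed.

End Coercive.

Lemma coercive_shift n (M : 'M[R]_n) c s : psd M -> 0 <= c ->
  coercive (c *: M + s *: 1%:M) s.
Proof.
move=> [_ M_ge0] c_ge0 x.
by rewrite qformD !qformZ qform1 lerDr mulr_ge0 ?M_ge0.
Qed.

Lemma norm2_invmxB_le n (A B : 'M[R]_n) s y :
  0 < s -> coercive A s -> coercive B s ->
  norm2 (invmx A *m y - invmx B *m y) <= frob (B - A) * norm2 y / s ^+ 2.
Proof.
move=> s_gt0 A_coercive B_coercive.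
rewrite -mulmxBl invmxB ?(coercive_unitmx s_gt0) // -!mulmxA.
apply: le_trans (coercive_norm2_invmx s_gt0 A_coercive _) _.
rewrite expr2 invfM mulrA ler_pM2r ?invr_gt0 //.
apply: le_trans (norm2_mulmx_le _ _) _; rewrite -mulrA.
exact/(ler_wpM2l (frob_ge0 _))/(coercive_norm2_invmx s_gt0 B_coercive).
Qed.

End QuadraticForm.

Section RealSpectral.
Variable R : realType.
Local Notation C := R[i].
Local Notation "x %:C" := (real_complex R x).
Local Notation cplx A := (map_mx (real_complex R) A).
Local Open Scope sesquilinear_scope.

(* MathComp's spectral theorem lives over a numClosedFieldType, so a real symmetric
   matrix is diagonalised by a unitary matrix over R[i], with real eigenvalues [f i]. *)
Definition spectral_decomp n (A : 'M[R]_n) (U : 'M[C]_n) (f : 'I_n -> R) :=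
  U \is unitarymx /\ cplx A = U^t* *m diag_mx (\row_i (f i)%:C) *m U.

Lemma symmetric_spectral_decomp n (A : 'M[R]_n) : A^T = A ->
  exists U f, spectral_decomp A U f /\ forall i, eigenvalue A (f i).
Proof.
move=> A_sym.
have A_herm : cplx A \is hermsymmx.
  apply: realsym_hermsym.
    by apply/is_hermitianmxP; rewrite expr0 scale1r map_mx_id // map_trmx A_sym.
  by apply/mxOverP => i j; rewrite mxE; apply/complex_realP; exists (A i j).
set U := spectralmx (cplx A); set D := spectral_diag (cplx A).
have D_real : forall i, exists r, D 0 i = r%:C.
  by move=> i; apply/complex_realP/(mxOverP (hermitian_spectral_diag_real A_herm)).
have U_unitary : U \is unitarymx by apply: spectral_unitarymx.
have AE : cplx A = U^t* *m diag_mx D *m U.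
  by rewrite -invmx_unitary //; apply/orthomx_spectralP/hermitian_normalmx.
exists U, (fun i => complex.Re (D 0 i)); rewrite /spectral_decomp.
have -> : \row_i (complex.Re (D 0 i))%:C = D.
  by apply/rowP => i; rewrite mxE; have [r ->] := D_real i.
split=> // i; have [r Dr] := D_real i.
suff : eigenvalue (cplx A) r%:C.
  by rewrite Dr /= eigenvalue_root_char -map_char_poly fmorph_root -eigenvalue_root_char.
apply/eigenvalueP; exists (row i U).
  rewrite -row_mul {1}AE -!mulmxA (mulmxA U) (unitarymxP U_unitary) mul1mx.
  by rewrite mul_diag_mx; apply/rowP => j; rewrite !mxE Dr.
apply/eqP => Ui0; have /rowP/(_ i) := congr1 (row i) (unitarymxP U_unitary).
by rewrite row_mul Ui0 mul0mx !mxE eqxx => /eqP; rewrite eq_sym oner_eq0.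
Qed.

Lemma spectral_qform n (A : 'M[R]_n) U f x : spectral_decomp A U f ->
  (qform A x)%:C = \sum_i (f i)%:C * `|(U *m cplx x) i 0| ^+ 2.
Proof.
move=> [_ AE]; have -> : (qform A x)%:C = (cplx (x^T *m A *m x)) 0 0 by rewrite mxE.
rewrite !map_mxM -map_trmx AE !mulmxA.
have x_real : map_mx conjC (cplx x) = cplx x.
  apply/matrixP => i j; rewrite !mxE; apply: conj_Creal.
  by apply/complex_realP; exists (x i j).
have -> : (cplx x)^T *m U^t* = (map_mx conjC (U *m cplx x))^T.
  by rewrite map_mxM x_real trmx_mul -!map_trmx.
rewrite -[_ *m U *m cplx x]mulmxA mxE; apply: eq_bigr => j _.
by rewrite mul_mx_diag !mxE normCK; ring.
Qed.

Lemma spectral_decomp1 n (U : 'M[C]_n) :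
  U \is unitarymx -> spectral_decomp 1%:M U (fun=> 1).
Proof.
move=> U_unitary; split=> //.
have -> : diag_mx (\row_i (1 : R)%:C) = 1%:M :> 'M[C]_n.
  by rewrite -diag_const_mx; congr diag_mx; apply/rowP => i; rewrite !mxE rmorph1.
by rewrite mulmx1 map_mx1; apply/esym/mulmx1C/unitarymxP.
Qed.

Lemma spectral_norm2 n (A : 'M[R]_n) U f x : spectral_decomp A U f ->
  (norm2 x ^+ 2)%:C = \sum_i `|(U *m cplx x) i 0| ^+ 2.
Proof.
move=> [U_unitary _]; rewrite -qform1 (spectral_qform _ (spectral_decomp1 U_unitary)).
by under eq_bigr do rewrite rmorph1 mul1r.
Qed.

Lemma spectral_qform_le n (A : 'M[R]_n) U f L x : spectral_decomp A U f ->
  (forall i, f i <= L) -> qform A x <= L * norm2 x ^+ 2.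
Proof.
move=> A_decomp f_le; rewrite -lecR (spectral_qform _ A_decomp) rmorphM /=.
rewrite (spectral_norm2 _ A_decomp) mulr_sumr; apply: ler_sum => i _.
by apply: ler_wpM2r; [exact/exprn_ge0/normr_ge0 | rewrite lecR].
Qed.

Lemma spectral_qform_ge n (A : 'M[R]_n) U f l x : spectral_decomp A U f ->
  (forall i, l <= f i) -> l * norm2 x ^+ 2 <= qform A x.
Proof.
move=> A_decomp f_ge; rewrite -lecR (spectral_qform _ A_decomp) rmorphM /=.
rewrite (spectral_norm2 _ A_decomp) mulr_sumr; apply: ler_sum => i _.
by apply: ler_wpM2r; [exact/exprn_ge0/normr_ge0 | rewrite lecR].
Qed.

Lemma spectral_decomp_affine n (A : 'M[R]_n) U f c k : spectral_decomp A U f ->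
  spectral_decomp (c *: 1%:M + k *: A) U (fun i => c + k * f i).
Proof.
move=> [U_unitary AE]; split=> //.
have -> : diag_mx (\row_i (c + k * f i)%:C) =
          c%:C *: 1%:M + k%:C *: diag_mx (\row_i (f i)%:C).
  apply/matrixP => i j; rewrite !mxE.
  by case: (i == j); rewrite /= ?mulr1n ?mulr0n ?rmorphD ?rmorphM ?mulr0 ?mulr1 ?addr0.
rewrite map_mxD !map_mxZ map_mx1 AE mulmxDr mulmxDl -!scalemxAr -!scalemxAl mulmx1.
by rewrite (mulmx1C (unitarymxP U_unitary)).
Qed.

Lemma spectral_decomp_sqr n (A : 'M[R]_n) U f : spectral_decomp A U f ->
  spectral_decomp (A *m A) U (fun i => f i ^+ 2).
Proof.
move=> [U_unitary AE]; split=> //=.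
set D := diag_mx (\row_i (f i)%:C).
have -> : diag_mx (\row_i (f i ^+ 2)%:C) = D *m D.
  by rewrite mulmx_diag; congr diag_mx; apply/rowP => i; rewrite !mxE rmorphXn.
rewrite map_mxM AE -!mulmxA (mulmxA U) (unitarymxP U_unitary) mul1mx.
by rewrite !mulmxA.
Qed.

Lemma spectral_decomp_tens m p (A : 'M[R]_m) (B : 'M[R]_p) U V f g :
  spectral_decomp A U f -> spectral_decomp B V g ->
  spectral_decomp (A *t B) (U *t V)
    (fun k => f (mxtens_unindex k).1 * g (mxtens_unindex k).2).
Proof.
move=> [U_unitary AE] [V_unitary BE].
have tr_tens : (U *t V)^t* = U^t* *t V^t* by rewrite trmx_tens map_mxT.
split.
  apply/unitarymxP; rewrite tr_tens tensmx_mul.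
  by rewrite (unitarymxP U_unitary) (unitarymxP V_unitary) tens1mx.
rewrite map_mxT AE BE tr_tens -!tensmx_mul tens_diag_mx.
by congr (_ *m diag_mx _ *m _); apply/rowP => k; rewrite !mxE rmorphM.
Qed.

End RealSpectral.

Section SymmetricMatrices.
Variable R : realType.

Lemma psd_tens m p (A : 'M[R]_m) (B : 'M[R]_p) : psd A -> psd B -> psd (A *t B).
Proof.
move=> A_psd B_psd; split; first by rewrite trmx_tens A_psd.1 B_psd.1.
have [U [f [A_decomp f_eig]]] := symmetric_spectral_decomp A_psd.1.
have [V [g [B_decomp g_eig]]] := symmetric_spectral_decomp B_psd.1.
move=> x; rewrite -/(qform _ x) -(mul0r (norm2 x ^+ 2)).
apply: (spectral_qform_ge _ (spectral_decomp_tens A_decomp B_decomp)) => k.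
by rewrite mulr_ge0 // (psd_eigenvalue_ge0 _ (f_eig _), psd_eigenvalue_ge0 _ (g_eig _)).
Qed.

Section ExtremeEigenvalues.
Variables (n : nat) (A : 'M[R]_n).
Hypotheses (n_gt0 : (0 < n)%N) (A_sym : A^T = A).

Lemma symmetric_spectral_extreme :
  exists U f, spectral_decomp A U f /\ forall i, lam_min A <= f i <= lam_max A.
Proof.
have [U [f [A_decomp f_eig]]] := symmetric_spectral_decomp A_sym.
set L := \sum_i `|f i|.
have f_bound i : `|f i| <= L by rewrite /L (bigD1 i) //= lerDl sumr_ge0.
have f_le i : f i <= L by have := f_bound i; rewrite ler_norml => /andP[].
have f_ge i : - L <= f i by have := f_bound i; rewrite ler_norml => /andP[].
have eig_bound a : eigenvalue A a -> - L <= a <= L.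
  case/eigenvalue_qform => x /norm2_gt0 x_gt0 Ax.
  have x2_gt0 : 0 < norm2 x ^+ 2 by rewrite exprn_gt0.
  have := spectral_qform_le x A_decomp f_le; have := spectral_qform_ge x A_decomp f_ge.
  by rewrite Ax !ler_pM2r // => -> ->.
exists U, f; split=> // i; apply/andP; split.
  apply: ge_inf; last exact: f_eig.
  by exists (- L) => a /eig_bound /andP[].
apply: ub_le_sup; last exact: f_eig.
by exists L => a /eig_bound /andP[].
Qed.

Lemma coercive_lam_min s : coercive A s -> s <= lam_min A.
Proof.
move=> A_coercive; have [U [f [_ f_eig]]] := symmetric_spectral_decomp A_sym.
apply: lb_le_inf; first by exists (f (Ordinal n_gt0)); apply: f_eig.
move=> a /eigenvalue_qform [x /norm2_gt0 x_gt0 Ax].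
by have := A_coercive x; rewrite Ax ler_pM2r // exprn_gt0.
Qed.

End ExtremeEigenvalues.

Lemma spectral_contraction n (A : 'M[R]_n) U f l L :
  A^T = A -> spectral_decomp A U f -> 0 < L -> l <= L ->
  (forall i, l <= f i <= L) ->
  forall x, norm2 ((1%:M - L^-1 *: A) *m x) <= (1 - l / L) * norm2 x.
Proof.
move=> A_sym A_decomp L_gt0 l_le_L f_bounds x.
set M := 1%:M - L^-1 *: A.
have M_decomp : spectral_decomp M U (fun i => 1 + - L^-1 * f i).
  by rewrite /M -[1%:M]scale1r -scaleNr; apply: spectral_decomp_affine.
have M_sym : M^T = M by rewrite /M linearB /= linearZ /= trmx1 A_sym.
have q_ge0 : 0 <= 1 - l / L by rewrite subr_ge0 ler_pdivrMr // mul1r.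
apply: norm2_le; first by rewrite mulr_ge0 ?norm2_ge0.
rewrite norm2_mulmx_sqr M_sym exprMn.
apply: (spectral_qform_le _ (spectral_decomp_sqr M_decomp)) => i.
have /andP[l_le_f f_le_L] := f_bounds i.
rewrite ler_sqr ?nnegrE //; last by rewrite mulNr subr_ge0 mulrC ler_pdivrMr // mul1r.
by rewrite mulNr lerD2l lerN2 mulrC ler_pM2l ?invr_gt0.
Qed.

End SymmetricMatrices.

Section GradientDescent.
Variable R : realType.

Section Iteration.
Variables (n : nat) (A : 'M[R]_n) (b : 'cV[R]_n) (eta : R).

Lemma gd_iterS_sub s k : A *m s = - b ->
  gd_iter A b eta k.+1 - s = (1%:M - eta *: A) *m (gd_iter A b eta k - s).
Proof.
move=> As; have -> : b = - (A *m s) by rewrite As opprK.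
by rewrite /= mulmxBl mul1mx -scalemxAl mulmxBr addrAC.
Qed.

Lemma gd_iter_sub_le s q : 0 <= q -> A *m s = - b ->
  (forall x, norm2 ((1%:M - eta *: A) *m x) <= q * norm2 x) ->
  forall k, norm2 (gd_iter A b eta k - s) <= q ^+ k * norm2 s.
Proof.
move=> q_ge0 As contr; elim=> [|k IHk]; first by rewrite /= sub0r norm2N expr0 mul1r.
rewrite gd_iterS_sub // exprS -mulrA; apply: le_trans (contr _) _.
exact: ler_wpM2l.
Qed.

End Iteration.

(* [K = ceil (kappa ln (1/eps))] works because [q = 1 - 1/kappa <= exp (-1/kappa)]. *)
Lemma geometric_iteration_count (q kappa eps : R) :
  0 <= q -> 0 < kappa -> 1 - q = kappa^-1 -> 0 < eps < 1 ->
  exists K : nat, K%:R <= kappa * ln (1 / eps) + 1 /\ q ^+ K <= eps.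
Proof.
move=> q_ge0 kappa_gt0 qE /andP[eps_gt0 eps_lt1].
have ln_eps : ln (1 / eps) = - ln eps by rewrite div1r lnV // posrE.
set x := kappa * ln (1 / eps).
have x_ge0 : 0 <= x.
  by apply: mulr_ge0; [exact: ltW | rewrite ln_eps oppr_ge0 ln_le0 // ltW].
have ceil_ge0 : 0 <= ceil x by rewrite ceil_ge0 (lt_le_trans _ x_ge0) // ltrN10.
exists `|ceil x|%N.
have KE : (`|ceil x|%N%:R : R) = (ceil x)%:~R by rewrite natr_absz ger0_norm.
split; first by rewrite KE; have := ceilB1_lt x; rewrite rmorphB /=; lra.
have q_le : q <= expR (- kappa^-1).
  by rewrite -qE; have := expR_ge1Dx (q - 1); rewrite opprB; lra.
apply: le_trans (lerXn2r _ _ _ q_le) _; rewrite ?nnegrE ?expR_ge0 //.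
rewrite -expRM_natl -[X in _ <= X]lnK ?posrE // ler_expR KE.
have : x <= (ceil x)%:~R by apply: ceil_ge.
rewrite /x ln_eps mulrN lerNl => h.
by rewrite mulrN -mulNr ler_pdivrMr // [_ * kappa]mulrC.
Qed.

Lemma gd_iter_converges n (A : 'M[R]_n) b s eps :
  (0 < n)%N -> A^T = A -> 0 < s -> coercive A s -> 0 < eps < 1 ->
  exists eta K, 0 < eta /\ K%:R <= cond_num A * ln (1 / eps) + 1 /\
    norm2 (gd_iter A b eta K - - (invmx A *m b)) <= norm2 b * eps / s.
Proof.
move=> n_gt0 A_sym s_gt0 A_coercive eps_bounds.
have [U [f [A_decomp f_bounds]]] := symmetric_spectral_extreme A_sym.
have lmin_gt0 : 0 < lam_min A.
  exact: lt_le_trans s_gt0 (coercive_lam_min n_gt0 A_sym A_coercive).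
have lmin_le_lmax : lam_min A <= lam_max A.
  by have /andP[] := f_bounds (Ordinal n_gt0); apply: le_trans.
have lmax_gt0 : 0 < lam_max A by apply: lt_le_trans lmin_le_lmax.
set q := 1 - lam_min A / lam_max A.
have q_ge0 : 0 <= q by rewrite subr_ge0 ler_pdivrMr // mul1r.
have qE : 1 - q = (cond_num A)^-1 by rewrite /q opprB addrC subrK invf_div.
have [K [K_le qK]] :=
  geometric_iteration_count q_ge0 (divr_gt0 lmax_gt0 lmin_gt0) qE eps_bounds.
exists (lam_max A)^-1, K; split; first by rewrite invr_gt0.
split=> //.
have A_fix : A *m - (invmx A *m b) = - b.
  by rewrite mulmxN mulmxA mulmxV ?mul1mx // (coercive_unitmx s_gt0 A_coercive).
have contr := spectral_contraction A_sym A_decomp lmax_gt0 lmin_le_lmax f_bounds.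
apply: le_trans (gd_iter_sub_le q_ge0 A_fix contr K) _.
rewrite norm2N [X in _ <= X]mulrAC [X in _ <= X]mulrC.
by apply: ler_pM; rewrite ?exprn_ge0 ?norm2_ge0 ?coercive_norm2_invmx.
Qed.

End GradientDescent.

Lemma frob_band_shift_le (R : realType) N d (G : 'M[R]_N) (S : 'M[R]_d) J c s :
  0 <= c -> c <= 1 ->
  frob ((c *: (band_trunc J G *t S) + s *: 1%:M) - (c *: (G *t S) + s *: 1%:M))
    <= frob S * Num.sqrt (tail_sq J G).
Proof.
move=> c_ge0 c_le1.
rewrite opprD addrACA subrr addr0 -scalerBr -tensmxBl frobZ frob_tens.
rewrite frob_band_trunc_sub ger0_norm // [frob S * _]mulrC.
by apply: ler_piMl c_le1; rewrite mulr_ge0 ?frob_ge0 ?sqrtr_ge0.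
Qed.

Theorem lemma1 (R : realType) :
  exists C : R, 0 < C /\
  forall (N d : nat), (0 < N)%N -> (0 < d)%N ->
  forall (G : 'M[R]_N) (S : 'M[R]_d) (mu : 'cV[R]_(N * d)) (T t : R)
         (v : 'cV[R]_(N * d)) (eps : R) (J : int),
  psd G -> psd S -> 0 < t -> t <= T -> 0 < eps < 1 -> J < (N : nat)%:Z ->
  psd (band_trunc J G) ->
  let a := expR (- t / 2) in
  let sg := Num.sqrt (1 - expR (- t)) in
  let b := v - a *: mu in
  let score := - (invmx (a ^+ 2 *: (G *t S) + sg ^+ 2 *: 1%:M) *m b) in
  let Abar := a ^+ 2 *: (band_trunc J G *t S) + sg ^+ 2 *: 1%:M in
  exists (eta : R) (K : nat),
    0 < eta /\
    K%:R <= C * (cond_num Abar * ln (1 / eps)) + C /\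
    norm2 (gd_iter Abar b eta K - score)
      <= norm2 b * eps / sg ^+ 2
         + frob S * norm2 b / sg ^+ 4 * Num.sqrt (tail_sq J G).
Proof.
exists 1; split=> // N d N_gt0 d_gt0 G S mu T t v eps J G_psd S_psd t_gt0 _ eps_bounds _.
move=> Gbar_psd a sg b score Abar.
set A := a ^+ 2 *: (G *t S) + sg ^+ 2 *: 1%:M in score *.
have sg2_gt0 : 0 < sg ^+ 2.
  by rewrite sqr_sqrtr ?subr_ge0 ?subr_gt0 ?ltW // expR_lt1 oppr_lt0.
have a2_le1 : a ^+ 2 <= 1.
  by rewrite expr_le1 ?expR_ge0 // expR_le1 mulNr oppr_le0 divr_ge0 // ltW.
have GS_psd := psd_tens G_psd S_psd; have GbarS_psd := psd_tens Gbar_psd S_psd.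
have A_coercive := coercive_shift (sg ^+ 2) GS_psd (sqr_ge0 a).
have Abar_coercive := coercive_shift (sg ^+ 2) GbarS_psd (sqr_ge0 a).
have Abar_sym : Abar^T = Abar by rewrite linearD /= !linearZ /= trmx1 GbarS_psd.1.
have Nd_gt0 : (0 < N * d)%N by rewrite muln_gt0 N_gt0.
have [eta [K [eta_gt0 [K_le gd_err]]]] :=
  gd_iter_converges b Nd_gt0 Abar_sym sg2_gt0 Abar_coercive eps_bounds.
exists eta, K; split=> //; split; first by rewrite mul1r.
rewrite -(subrK (- (invmx Abar *m b)) (gd_iter _ _ _ _)) -addrA.
apply: le_trans (norm2D _ _) (lerD gd_err _).
rewrite /score opprK addrC.
apply: le_trans (norm2_invmxB_le _ sg2_gt0 A_coercive Abar_coercive) _.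
have -> : frob S * norm2 b / sg ^+ 4 * Num.sqrt (tail_sq J G) =
          frob S * Num.sqrt (tail_sq J G) * norm2 b / sg ^+ 4 by ring.
have -> : sg ^+ 4 = (sg ^+ 2) ^+ 2 by rewrite -exprM.
rewrite ler_pM2r; last by rewrite invr_gt0 exprn_gt0.
by apply: ler_wpM2r; [exact: norm2_ge0 | exact: frob_band_shift_le (sqr_ge0 a) a2_le1].
Qed.
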